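(* Let $\mathcal D=\{\mathbf D_i:i\in I\}$ be a class of upwards-closed dependency notions, and for each $i\in I$ let $\gamma_i:\mathbb N\to\mathbb N$ be such that $\mathbf D_i$ is $\gamma_i$-bounded. Let $\phi\in\mathbf{FO}(\mathcal D)$ be a formula in which each $\mathbf D_i$ occurs $k_i$ times, and let $\nu_\phi(n)=\sum_{i\in I}k_i\gamma_i(n)$. Then for all finite structures $\mathfrak M$ and all teams $X$: if $\mathfrak M\models_X\phi$, then there exists $Y\subseteq X$ with $|Y|\le\nu_\phi(|M|)$ and $\mathfrak M\models_Y\phi$.
   Context: Team semantics (lax version). For a structure $\mathfrak M$ with domain $M$, a team $X$ is a (possibly empty) set of assignments $s:V\to M$, $V$ a finite set of variables; $X(\vec v)=\{s(\vec v):s\in X\}$. Satisfaction for formulas in negation normal form: first-order literal $\alpha$: every $s\in X$ satisfies $\alpha$ (Tarski); $\psi\vee\theta$: $X=Y\cup Z$ with $\mathfrak M\models_Y\psi$, $\mathfrak M\models_Z\theta$; $\psi\wedge\theta$: both; $\exists v\psi$: some $F:X\to\mathcal P(M)\setminus\{\emptyset\}$ with $\mathfrak M\models_{X[F/v]}\psi$, $X[F/v]=\{s[m/v]:s\in X,m\in F(s)\}$; $\forall v\psi$: $\mathfrak M\models_{X[M/v]}\psi$, $X[M/v]=\{s[m/v]:s\in X,m\in M\}$. A $k$-ary dependency notion $\mathbf D$ is an isomorphism-closed class of structures $(M,R)$, $R$ a $k$-ary relation; the atom $\mathbf D\vec v$ satisfies $\mathfrak M\models_X\mathbf D\vec v$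 iff $(M,X(\vec v))\in\mathbf D$. $\mathbf D$ is upwards-closed if $(M,R)\in\mathbf D$, $R\subseteq S$ imply $(M,S)\in\mathbf D$. For $\gamma:\mathbb N\to\mathbb N$, $\mathbf D$ is $\gamma$-bounded if for all finite structures $\mathfrak M$, teams $X$ and tuples $\vec v$, whenever $\mathfrak M\models_X\mathbf D\vec v$ there is $Y\subseteq X$ with $|Y|\le\gamma(|M|)$ and $\mathfrak M\models_Y\mathbf D\vec v$. $\mathbf{FO}(\mathcal D)$ is first-order logic in negation normal form extended with the atoms $\mathbf D\vec v$ for $\mathbf D\in\mathcal D$. *)

From mathcomp Require Import all_boot.
From Stdlib Require List.
Set Implicit Arguments.
Unset Strict Implicit.
Unset Printing Implicit Defensive.

Record depnotion (k : nat) := DepNotion {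
  dn_class :> forall M : Type, (k.-tuple M -> Prop) -> Prop;
  dn_iso : forall (M N : Type) (f : M -> N) (R : k.-tuple M -> Prop),
    bijective f ->
    dn_class R -> dn_class (fun t : k.-tuple N => exists t', R t' /\ t = map_tuple f t')
}.

Definition upwards_closed k (D : depnotion k) : Prop :=
  forall (M : Type) (R S : k.-tuple M -> Prop),
    (forall t, R t -> S t) -> D M R -> D M S.

Definition var := nat.

(* Vocabulary: relation symbols and function symbols (constants are
   0-ary function symbols). *)
Record vocab := Vocab { rsym : Type; fsym : Type }.

Inductive term (L : vocab) :=
| TVar of var
| TApp of fsym L & seq (term L).

Inductive literal (L : vocab) :=
| LEq of term L & term L
| LNeq of term L & term L
| LRel of rsym L & seq (term L)
| LNRel of rsym L & seq (term L).

(* Formulas of FO(D) in negation normal form; the dependency atoms are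
   indexed by i : I, where D_i has arity ar i. *)
Inductive formula (L : vocab) (I : Type) (ar : I -> nat) :=
| FLit of literal L
| FDep (i : I) of (ar i).-tuple var
| FOr of formula L ar & formula L ar
| FAnd of formula L ar & formula L ar
| FEx of var & formula L ar
| FAll of var & formula L ar.

Record structure (L : vocab) := Structure {
  dom :> finType;
  rel_interp : rsym L -> seq dom -> Prop;
  fun_interp : fsym L -> seq dom -> dom
}.

(* An assignment s : V -> M with V a finite set of variables, represented
   as a partial function (defined exactly on V). *)
Definition assignment (M : Type) := var -> option M.

Definition upd M (s : assignment M) (v : var) (m : M) : assignment M :=
  fun w => if w == v then Some m else s w.

Definition team (M : Type) := assignment M -> Prop.

Definition team_on (M : Type) (V : seq var) (X : team M) : Prop :=
  forall s, X s -> forall w, isSome (s w) = (w \in V).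

Definition subteam M (Y X : team M) : Prop := forall s, Y s -> X s.

Definition card_le M (Y : team M) (n : nat) : Prop :=
  exists l : seq (assignment M), (forall s, Y s -> List.In s l) /\ size l <= n.

Definition team_rel M k (X : team M) (vs : k.-tuple var) : k.-tuple M -> Prop :=
  fun t => exists s, X s /\ [seq s v | v <- vs] = [seq Some x | x <- t].

Fixpoint all_some M (l : seq (option M)) : option (seq M) :=
  match l with
  | [::] => Some [::]
  | o :: l' => match o, all_some l' with
               | Some x, Some xs => Some (x :: xs)
               | _, _ => None
               end
  end.

Section Eval.
Variables (L : vocab) (A : structure L) (s : assignment A).

Fixpoint eval_term (t : term L) : option A :=
  match t with
  | TVar v => s v
  | TApp f ts => omap (fun_interp f) (all_some (map eval_term ts))
  end.

Definition sat_lit (l : literal L) : Prop :=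
  match l with
  | LEq t1 t2 => exists a, eval_term t1 = Some a /\ eval_term t2 = Some a
  | LNeq t1 t2 => exists a b, eval_term t1 = Some a /\ eval_term t2 = Some b /\ a <> b
  | LRel R ts => exists xs, all_some (map eval_term ts) = Some xs /\ rel_interp R xs
  | LNRel R ts => exists xs, all_some (map eval_term ts) = Some xs /\ ~ rel_interp R xs
  end.
End Eval.

(* Lax team semantics *)
Fixpoint sat (L : vocab) (I : Type) (ar : I -> nat) (D : forall i, depnotion (ar i))
    (A : structure L) (X : team A) (phi : formula L ar) : Prop :=
  match phi with
  | FLit l => forall s, X s -> sat_lit s l
  | FDep i vs => D i A (team_rel X vs)
  | FOr p q => exists Y Z : team A,
      (forall s, X s <-> Y s \/ Z s) /\ sat D Y p /\ sat D Z q
  | FAnd p q => sat D X p /\ sat D X q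
  | FEx v p => exists F : assignment A -> A -> Prop,
      (forall s, X s -> exists m, F s m) /\
      sat D (fun s' => exists s m, X s /\ F s m /\ s' = upd s v m) p
  | FAll v p => sat D (fun s' => exists s m, X s /\ s' = upd s v m) p
  end.

Definition bounded k (D : depnotion k) (gamma : nat -> nat) : Prop :=
  forall (M : finType) (V : seq var) (X : team M) (vs : k.-tuple var),
    0 < #|M| -> team_on V X ->
    D M (team_rel X vs) ->
    exists Y : team M, subteam Y X /\ card_le Y (gamma #|M|) /\ D M (team_rel Y vs).

(* nu_phi(n) = sum_i k_i * gamma_i(n), k_i = number of occurrences of D_i
   in phi; computed as the sum of gamma_i(n) over the occurrences. *)
Fixpoint nu (L : vocab) (I : Type) (ar : I -> nat) (gamma : I -> nat -> nat)
    (phi : formula L ar) (n : nat) : nat :=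
  match phi with
  | FLit _ => 0
  | FDep i _ => gamma i n
  | FOr p q | FAnd p q => nu gamma p n + nu gamma q n
  | FEx _ p | FAll _ p => nu gamma p n
  end.

(* Strengthen the claim: every satisfying team X contains a small subteam Y such
   that phi holds in EVERY team between Y and X.  Upwards closure gives this at
   dependency atoms, literals are downwards closed (so Y can be empty there), and
   the connectives only take unions of the witnesses of their components (hence
   the sum nu).  At the quantifiers the witness lives in the extended team
   X[F/v]; it is pulled back to X by choosing one source assignment for each of
   its members, and for a team W between the pulled-back witness and X the
   supplementing function is restricted to values that land in the witness. *)
From Stdlib Require Import ClassicalEpsilon.
From mathcomp Require Import all_boot.

Set Implicit Arguments.
Unset Strict Implicit.
Unset Printing Implicit Defensive.

Definition teamU M (Y Z : team M) : team M := fun s => Y s \/ Z s.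

Definition team_image M (f : assignment M -> assignment M) (Y : team M) : team M :=
  fun s => exists s', Y s' /\ s = f s'.

Lemma card_le_teamU M (Y Z : team M) m n :
  card_le Y m -> card_le Z n -> card_le (teamU Y Z) (m + n).
Proof.
move=> [l1 [Hl1 Hs1]] [l2 [Hl2 Hs2]]; exists (l1 ++ l2).
split; last by rewrite size_cat leq_add.
by move=> s [/Hl1|/Hl2] ?; apply: List.in_or_app; [left|right].
Qed.

Lemma card_le_team_image M (f : assignment M -> assignment M) (Y : team M) n :
  card_le Y n -> card_le (team_image f Y) n.
Proof.
move=> [l [Hl Hs]]; exists (map f l); split; last by rewrite size_map.
by move=> s [s' [Ys ->]]; apply: List.in_map; apply: Hl.
Qed.

Lemma team_on_subteam M V (X Y : team M) : team_on V X -> subteam Y X -> team_on V Y.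
Proof. by move=> HX YX s Ys; apply: HX; apply: YX. Qed.

Lemma team_on_upd M V (X X' : team M) v :
  team_on V X -> (forall s', X' s' -> exists s m, X s /\ s' = upd s v m) ->
  team_on (v :: V) X'.
Proof.
move=> HX HX' s' /HX' [s [m [Xs ->]]] w; rewrite /upd in_cons.
by case: (w == v) => //=; apply: HX.
Qed.

Lemma team_rel_subteam M k (Y X : team M) (vs : k.-tuple var) t :
  subteam Y X -> team_rel Y vs t -> team_rel X vs t.
Proof. by move=> YX [s [Ys E]]; exists s; split=> //; apply: YX. Qed.

Lemma choose_sources M (R : assignment M -> assignment M -> Prop) (X Y' : team M) n :
  (forall s', Y' s' -> exists s, X s /\ R s s') -> card_le Y' n ->
  exists Y : team M, [/\ subteam Y X, card_le Y n,
    forall s', Y' s' -> exists s, Y s /\ R s s'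
  & forall s, Y s -> exists s', Y' s' /\ R s s'].
Proof.
move=> Hsrc Hcard.
pose src s' := epsilon (inhabits (fun _ => None)) (fun s => X s /\ R s s').
have srcP s' : Y' s' -> X (src s') /\ R (src s') s'.
  by move=> /Hsrc; apply: epsilon_spec.
exists (team_image src Y'); split; last 2 first.
- by move=> s' Y's'; exists (src s'); split; [exists s'|case: (srcP _ Y's')].
- by move=> s [s' [Y's' ->]]; exists s'; split; last case: (srcP _ Y's').
- by move=> s [s' [Y's' ->]]; case: (srcP _ Y's').
- exact: card_le_team_image.
Qed.

Section Supports.
Variables (L : vocab) (I : Type) (ar : I -> nat)
  (D : forall i, depnotion (ar i)) (A : structure L).

Definition supports (phi : formula L ar) (Y X : team A) : Prop :=
  forall W : team A, subteam Y W -> subteam W X -> sat D W phi.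

Lemma supports_lit l (X : team A) :
  sat D X (FLit ar l) -> supports (FLit ar l) (fun _ => False) X.
Proof. by move=> HX W _ WX s /WX; apply: HX. Qed.

Lemma supports_dep i (vs : (ar i).-tuple var) (Y X : team A) :
  upwards_closed (D i) -> sat D Y (FDep L vs) -> supports (FDep L vs) Y X.
Proof.
move=> Hup HY W YW _ /=; apply: Hup HY => t.
exact: team_rel_subteam.
Qed.

Lemma supports_or p q (X Y Z Y1 Z1 : team A) :
  (forall s, X s <-> Y s \/ Z s) -> subteam Y1 Y -> subteam Z1 Z ->
  supports p Y1 Y -> supports q Z1 Z -> supports (FOr p q) (teamU Y1 Z1) X.
Proof.
move=> HX Y1Y Z1Z HY1 HZ1 W YW WX.
exists (fun s => W s /\ Y s), (fun s => W s /\ Z s); split; last split.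
- move=> s; split; last by case=> -[].
  by move=> Ws; case/HX: (WX _ Ws) => ?; [left|right].
- apply: HY1; last by move=> s [].
  by move=> s Y1s; split; [apply: YW; left|apply: Y1Y].
- apply: HZ1; last by move=> s [].
  by move=> s Z1s; split; [apply: YW; right|apply: Z1Z].
Qed.

Lemma supports_and p q (X Y1 Z1 : team A) :
  supports p Y1 X -> supports q Z1 X -> supports (FAnd p q) (teamU Y1 Z1) X.
Proof.
move=> HY1 HZ1 W YW WX; split; [apply: HY1|apply: HZ1] => // s ?.
- by apply: YW; left.
- by apply: YW; right.
Qed.

Lemma supports_ex v p (X Y Y' : team A) (F : assignment A -> A -> Prop) :
  (forall s, X s -> exists m, F s m) ->
  supports p Y' (fun s' => exists s m, X s /\ F s m /\ s' = upd s v m) ->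
  subteam Y X ->
  (forall s', Y' s' -> exists s, Y s /\ exists m, F s m /\ s' = upd s v m) ->
  (forall s, Y s -> exists s', Y' s' /\ exists m, F s m /\ s' = upd s v m) ->
  supports (FEx v p) Y X.
Proof.
move=> HF HY' YX Hsrc Htgt W YW WX.
exists (fun s m => F s m /\ (Y' (upd s v m) \/ ~ Y s)); split.
  move=> s Ws; case: (classic (Y s)) => [Ys|nYs].
    by have [s' [Y's' [m [Fm E]]]] := Htgt s Ys; exists m; subst s'; split; [|left].
  by have [m Fm] := HF s (WX s Ws); exists m; split; [|right].
apply: HY'.
  move=> s' Y's'; have [s [Ys [m [Fm E]]]] := Hsrc s' Y's'; subst s'.
  by exists s, m; split; [apply: YW|split; [split; [|left]|]].
by move=> s' [s [m [Ws [[Fm _] ->]]]]; exists s, m; split=> //; apply: WX.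
Qed.

Lemma supports_all v p (X Y Y' : team A) :
  supports p Y' (fun s' => exists s m, X s /\ s' = upd s v m) ->
  (forall s', Y' s' -> exists s, Y s /\ exists m, s' = upd s v m) ->
  supports (FAll v p) Y X.
Proof.
move=> HY' Hsrc W YW WX; apply: HY'.
  move=> s' /Hsrc [s [Ys [m ->]]].
  by exists s, m; split=> //; apply: YW.
by move=> s' [s [m [Ws ->]]]; exists s, m; split=> //; apply: WX.
Qed.

Variables (gamma : I -> nat -> nat)
  (Hup : forall i, upwards_closed (D i))
  (Hbd : forall i, bounded (D i) (gamma i)).

Lemma small_support (phi : formula L ar) V (X : team A) :
  0 < #|dom A| -> team_on V X -> sat D X phi ->
  exists Y : team A,
    [/\ subteam Y X, card_le Y (nu gamma phi #|dom A|) & supports phi Y X].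
Proof.
move=> A0; elim: phi V X => [l|i vs|p IHp q IHq|p IHp q IHq|v p IHp|v p IHp] V X HV /=.
- move=> HX; exists (fun _ => False); split=> //; last exact: supports_lit.
  by exists [::].
- move=> HX; have [Y [YX [Ycard HY]]] := Hbd A0 HV HX.
  by exists Y; split=> //; apply: supports_dep.
- move=> [Y [Z [HX [HY HZ]]]].
  have HVY : team_on V Y by apply: team_on_subteam HV _ => s ?; apply/HX; left.
  have HVZ : team_on V Z by apply: team_on_subteam HV _ => s ?; apply/HX; right.
  have [Y1 [Y1Y Y1card HY1]] := IHp _ _ HVY HY.
  have [Z1 [Z1Z Z1card HZ1]] := IHq _ _ HVZ HZ.
  exists (teamU Y1 Z1); split; last exact: supports_or HY1 HZ1.
  + by move=> s [/Y1Y|/Z1Z] ?; apply/HX; [left|right].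
  + exact: card_le_teamU.
- move=> [HP HQ].
  have [Y1 [Y1X Y1card HY1]] := IHp _ _ HV HP.
  have [Z1 [Z1X Z1card HZ1]] := IHq _ _ HV HQ.
  exists (teamU Y1 Z1); split; last exact: supports_and.
  + by move=> s [/Y1X|/Z1X].
  + exact: card_le_teamU.
- move=> [F [HF HXF]].
  have HVF : team_on (v :: V) (fun s' => exists s m, X s /\ F s m /\ s' = upd s v m).
    by apply: team_on_upd HV _ => s' [s [m [Xs [_ ->]]]]; exists s, m.
  have [Y' [Y'XF Y'card HY']] := IHp _ _ HVF HXF.
  pose R (s s' : assignment A) := exists m, F s m /\ s' = upd s v m.
  have [|Y [YX Ycard Hsrc Htgt]] := choose_sources (R := R) (X := X) _ Y'card.
    by move=> s' /Y'XF [s [m [Xs [Fm ->]]]]; exists s; split=> //; exists m.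
  by exists Y; split=> //; apply: supports_ex HY' YX Hsrc Htgt.
- move=> HXM.
  have HVM : team_on (v :: V) (fun s' => exists s m, X s /\ s' = upd s v m).
    exact: team_on_upd HV _.
  have [Y' [Y'XM Y'card HY']] := IHp _ _ HVM HXM.
  pose R (s s' : assignment A) := exists m, s' = upd s v m.
  have [|Y [YX Ycard Hsrc _]] := choose_sources (R := R) (X := X) _ Y'card.
    by move=> s' /Y'XM [s [m [Xs ->]]]; exists s; split=> //; exists m.
  by exists Y; split=> //; apply: supports_all HY' Hsrc.
Qed.

End Supports.

Theorem mainTheorem7 (L : vocab) (I : Type) (ar : I -> nat)
  (D : forall i, depnotion (ar i)) (gamma : I -> nat -> nat)
  (Hup : forall i, upwards_closed (D i))
  (Hbd : forall i, bounded (D i) (gamma i))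
  (phi : formula L ar) (A : structure L) (V : seq var) (X : team A) :
  0 < #|dom A| -> team_on V X ->
  sat D X phi ->
  exists Y : team A, subteam Y X /\ card_le Y (nu gamma phi #|dom A|) /\ sat D Y phi.
Proof.
move=> A0 HV HX.
have [Y [YX Ycard HY]] := small_support Hup Hbd A0 HV HX.
by exists Y; split=> //; split=> //; apply: HY.
Qed.
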